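(* Let $\mathcal P=\{p_0,\dots,p_6\}$ be a typical heptagonal $7$-configuration with a cyclic numeration (indices modulo $7$). Then $d(p_i)+d(p_{i+1})=5$ if the edge $[p_i,p_{i+1}]$ is internal, and $d(p_i)+d(p_{i+1})=7$ if it is external.
   Context: A $7$-configuration is a set of $7$ distinct points in $\mathbb{RP}^2$; it is typical if no three of its points are collinear and no six lie on a common conic. It is heptagonal if there is a line $\ell$ disjoint from it such that its points are the vertices of a convex heptagon in $\mathbb{RP}^2\smallsetminus\ell$; a cyclic numeration lists the points as consecutive vertices of this heptagon. For $i\ne j$ let $Q_{i,j}$ be the conic through the five points of $\mathcal P\smallsetminus\{p_i,p_j\}$, and set $d_{i,j}=0$ if $p_i$ lies inside $Q_{i,j}$ and $d_{i,j}=1$ if outside (''inside'' = the component of the complement homeomorphic to a disc). The dominance index is $d(p_i)=\sum_{j\ne i}d_{i,j}$. The edge $[p_i,p_{i+1}]$ is internal if $d_{i,i+1}=d_{i+1,i}=0$ and external if $d_{i,i+1}=d_{i+1,i}=1$. *)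

From HB Require Import structures.
From mathcomp Require Import all_boot all_order all_algebra.
From mathcomp Require Import boolp reals.
Set Implicit Arguments. Unset Strict Implicit. Unset Printing Implicit Defensive.
Import Order.TTheory GRing.Theory Num.Theory.
Local Open Scope ring_scope.

Section Defs.
Variable R : realType.

(* Points of RP^2 are represented by nonzero row vectors of R^3
   (homogeneous coordinates). *)
Definition hpoint (x : 'rV[R]_3) : Prop := x != 0.

Definition proj_eq (x y : 'rV[R]_3) : Prop := exists c : R, c != 0 /\ x = c *: y.

Definition mx3 (a b c : 'rV[R]_3) : 'M[R]_3 :=
  \matrix_(k < 3, l < 3)
    (if k == 0 :> nat then a 0 l else if k == 1 :> nat then b 0 l else c 0 l).

Definition collinear (a b c : 'rV[R]_3) : Prop := \det (mx3 a b c) = 0.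

Definition lform (l x : 'rV[R]_3) : R := \sum_(k < 3) l 0 k * x 0 k.

Definition qf (M : 'M[R]_3) (x : 'rV[R]_3) : R := (x *m M *m x^T) 0 0.

(* a (possibly degenerate) conic: a nonzero symmetric quadratic form *)
Definition conic_form (M : 'M[R]_3) : Prop := M != 0 /\ M^T = M.

Definition on_conic (M : 'M[R]_3) (x : 'rV[R]_3) : Prop := qf M x = 0.

Definition line_meets (M : 'M[R]_3) (x v : 'rV[R]_3) : Prop :=
  exists s t : R, (s != 0 \/ t != 0) /\ qf M (s *: x + t *: v) = 0.

(* x lies inside the conic M: x is not on M, and every projective line through
   x meets M (this is the disc component of the complement of a nondegenerate
   conic with real points). *)
Definition inside (M : 'M[R]_3) (x : 'rV[R]_3) : Prop :=
  ~ on_conic M x /\ forall v : 'rV[R]_3, hpoint v -> ~ proj_eq v x -> line_meets M x v.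

Definition config7 (p : 'I_7 -> 'rV[R]_3) : Prop :=
  (forall i, hpoint (p i)) /\ (forall i j, i != j -> ~ proj_eq (p i) (p j)).

Definition typical (p : 'I_7 -> 'rV[R]_3) : Prop :=
  (forall i j k, i != j -> j != k -> i != k -> ~ collinear (p i) (p j) (p k)) /\
  (forall S : {set 'I_7}, #|S| = 6 ->
     ~ exists M, conic_form M /\ forall i, i \in S -> on_conic M (p i)).

(* heptagonal with the given numeration being cyclic: there is a line
   l (given by the linear form l) missing all points such that, in the affine
   chart RP^2 \ l (coordinates x / lform l x), p_0, ..., p_6 are the consecutive
   vertices of a convex heptagon, i.e. for each edge [p_i, p_(i+1)] all other
   vertices lie strictly on the same side of the line through that edge.
   In the chart the orientation of the triangle (p_i, p_(i+1), p_j) is the sign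
   of det(p_i,p_(i+1),p_j) / (l p_i * l p_(i+1) * l p_j). *)
Definition heptagonal_cyclic (p : 'I_7 -> 'rV[R]_3) : Prop :=
  exists l : 'rV[R]_3,
    (forall i, lform l (p i) != 0) /\
    forall i j k : 'I_7,
      j != i -> j != ordS i -> k != i -> k != ordS i ->
      0 < (\det (mx3 (p i) (p (ordS i)) (p j)) / lform l (p j)) *
          (\det (mx3 (p i) (p (ordS i)) (p k)) / lform l (p k)).

Definition conicQ (p : 'I_7 -> 'rV[R]_3) (i j : 'I_7) (M : 'M[R]_3) : Prop :=
  conic_form M /\ forall k, k != i -> k != j -> on_conic M (p k).

Definition inside_Q (p : 'I_7 -> 'rV[R]_3) (i j : 'I_7) : Prop :=
  exists M, conicQ p i j M /\ inside M (p i).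

Definition dcoef (p : 'I_7 -> 'rV[R]_3) (i j : 'I_7) : nat :=
  if `[< inside_Q p i j >] then 0%N else 1%N.

Definition dom_index (p : 'I_7 -> 'rV[R]_3) (i : 'I_7) : nat :=
  (\sum_(j < 7 | j != i) dcoef p i j)%N.

Definition internal_edge (p : 'I_7 -> 'rV[R]_3) (i : 'I_7) : Prop :=
  dcoef p i (ordS i) = 0%N /\ dcoef p (ordS i) i = 0%N.

Definition external_edge (p : 'I_7 -> 'rV[R]_3) (i : 'I_7) : Prop :=
  dcoef p i (ordS i) = 1%N /\ dcoef p (ordS i) i = 1%N.

End Defs.

From HB Require Import structures.
From mathcomp Require Import all_boot all_order all_algebra.
From mathcomp Require Import boolp reals ring lra zify.
Set Implicit Arguments. Unset Strict Implicit. Unset Printing Implicit Defensive.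
Import Order.TTheory GRing.Theory Num.Theory.

(* Fix the edge [p_i, p_(i+1)] and a third index j, and let q_0, ..., q_3 be the four
   remaining points. The conics through q_0, ..., q_3 form a pencil whose member C_y through y
   is a combination of two line pairs with bracket coefficients, so Q_(i,j) = C_(p_(i+1)) and
   Q_(i+1,j) = C_(p_i). A point x is inside a nondegenerate conic M with a real point iff
   det M * M(x) > 0. Now C_y(x) = - C_x(y), while det C_y is a constant times a product of
   brackets [q_a q_b y]; convexity puts p_i and p_(i+1) on the same side of each line q_a q_b,
   so det C_(p_i) and det C_(p_(i+1)) have the same sign. Hence exactly one of d_(i,j),
   d_(i+1,j) vanishes, and summing over the five such j gives
   d(p_i) + d(p_(i+1)) = 5 + d_(i,i+1) + d_(i+1,i). *)

Lemma ordS_neq n (i : 'I_n.+2) : ordS i != i.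
Proof.
rewrite -(inj_eq val_inj) /=; have := ltn_ord i.
case: (ltnP i.+1 n.+2) => [lt _|ge lt]; first by rewrite modn_small //; lia.
have -> : i.+1 = n.+2 by lia.
by rewrite modnn; lia.
Qed.

Lemma card_neq2 (T : finType) (a b : T) : a != b ->
  #|[pred j | (j != a) && (j != b)]| = #|T| - 2.
Proof.
move=> ab; have := cardsC [set a; b]; rewrite cards2 ab => <-; rewrite addKn.
by apply: eq_card => j; rewrite !inE negb_or.
Qed.

Lemma enum_neq3 (T : finType) (a b c : T) : uniq [:: a; b; c] -> #|T| = 7 ->
  exists a0 a1 a2 a3, uniq [:: a0; a1; a2; a3] /\
    forall j, (j \in [:: a0; a1; a2; a3]) = [&& j != a, j != b & j != c].
Proof.
move=> abc cardT; set S := [predC [:: a; b; c]].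
have : size (enum S) = 4.
  have := cardC (mem [:: a; b; c]); rewrite cardT (card_uniqP abc) -cardE => h.
  by apply/eqP; rewrite -(eqn_add2l 3) h.
have := enum_uniq S; have := mem_enum S.
case: (enum S) => [|a0 [|a1 [|a2 [|a3 [|]]]]] //= memS uniqS _.
by exists a0, a1, a2, a3; split=> // j; rewrite memS !inE !negb_or.
Qed.

Local Open Scope ring_scope.

Local Notation i0 := (@Ordinal 3 0 isT).
Local Notation i1 := (@Ordinal 3 1 isT).
Local Notation i2 := (@Ordinal 3 2 isT).

Lemma sum_ord3 (V : nmodType) (f : 'I_3 -> V) : \sum_(k < 3) f k = f i0 + f i1 + f i2.
Proof.
rewrite !big_ord_recr big_ord0 /= add0r.
by congr (f _ + f _ + f _); apply: val_inj.
Qed.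

Lemma det_mx33 (R : comNzRingType) (M : 'M[R]_3) : \det M =
  M i0 i0 * (M i1 i1 * M i2 i2 - M i1 i2 * M i2 i1)
  - M i0 i1 * (M i1 i0 * M i2 i2 - M i1 i2 * M i2 i0)
  + M i0 i2 * (M i1 i0 * M i2 i1 - M i1 i1 * M i2 i0).
Proof.
pose f (a b : nat) := M (inord a) (inord b).
have Mf x y : M x y = f x y by rewrite /f !inord_val.
rewrite (expand_det_row _ i0) sum_ord3 /cofactor !(expand_det_row _ ord0).
rewrite !big_ord_recr !big_ord0 /cofactor !det_mx11 !mxE !Mf /bump /=.
by rewrite !expr0 !expr1 !mul1r !mulN1r; ring.
Qed.

Lemma quad_nonpos_lin_eq0 (R : realFieldType) (b c : R) :
  (forall t, 2 * t * b + t ^+ 2 * c <= 0) -> b = 0.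
Proof.
move=> H; pose u := 1 + c ^+ 2; have u_gt0 : 0 < u by rewrite /u; nra.
have : b ^+ 2 * (2 * u + c) / u ^+ 2 <= 0.
  by rewrite (_ : _ / _ = 2 * (b / u) * b + (b / u) ^+ 2 * c) ?H //; field; lra.
rewrite pmulr_lle0 ?invr_gt0 ?exprn_gt0 // => hb.
by apply/eqP; rewrite -sqrf_eq0 eq_le sqr_ge0 andbT; rewrite /u in hb; nra.
Qed.

Lemma indefinite_binary_form (R : realFieldType) (g11 g12 g22 : R) : g11 * g22 - g12 ^+ 2 < 0 ->
  exists a b, a ^+ 2 * g11 + 2 * a * b * g12 + b ^+ 2 * g22 < 0.
Proof.
move=> h; have [h11|h11|h11] := ltrgtP g11 0.
- by exists 1, 0; rewrite expr0n /= !mulr0 !mul0r !addr0 expr1n mul1r.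
- exists (- g12), g11.
  by rewrite (_ : _ + _ = g11 * (g11 * g22 - g12 ^+ 2)) ?pmulr_rlt0 //; ring.
- exists (- (g22 + 1)), (2 * g12); rewrite h11 in h *.
  by rewrite (_ : _ + _ = - 4 * g12 ^+ 2); [nra | ring].
Qed.

Lemma sign_xor (R : realDomainType) (d1 d2 k : R) : 0 < d1 * d2 -> k != 0 ->
  (0 < d1 * k) = ~~ (0 < d2 * - k).
Proof.
move=> d12 k_neq0; have k2 : 0 < k ^+ 2 by rewrite exprn_even_gt0.
have : (d1 * k) * (d2 * - k) < 0 by rewrite (_ : _ * _ = - (d1 * d2 * k ^+ 2)); [nra | ring].
move=> neg; apply/idP/idP => [h|]; rewrite -leNgt; [nra | move=> h; nra].
Qed.

Lemma sign_trans (R : realDomainType) (s a b : R) : 0 < s * a -> 0 < a * b -> 0 < s * b.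
Proof. by move=> sa ab; rewrite ltNge; apply/negP => sb; nra. Qed.

Lemma sign_common (R : realDomainType) (s a b : R) : 0 < s * a -> 0 < s * b -> 0 < a * b.
Proof. by move=> sa sb; rewrite ltNge; apply/negP => ab; nra. Qed.

Section QuadraticForms.
Variable R : realType.
Implicit Types (M : 'M[R]_3) (x y v w z : 'rV[R]_3) (a b s t : R).

Definition bracket x y z := \det (mx3 x y z).

Lemma bracketE x y z : bracket x y z =
  x 0 i0 * (y 0 i1 * z 0 i2 - y 0 i2 * z 0 i1)
  - x 0 i1 * (y 0 i0 * z 0 i2 - y 0 i2 * z 0 i0)
  + x 0 i2 * (y 0 i0 * z 0 i1 - y 0 i1 * z 0 i0).
Proof. by rewrite /bracket det_mx33 /mx3 !mxE. Qed.

Definition bf M x y := (x *m M *m y^T) 0 0.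

Lemma qfE M x : qf M x = bf M x x.
Proof. by []. Qed.

Lemma qfD M1 M2 x : qf (M1 + M2) x = qf M1 x + qf M2 x.
Proof. by rewrite /qf mulmxDr mulmxDl mxE. Qed.

Lemma qfZ a M x : qf (a *: M) x = a * qf M x.
Proof. by rewrite /qf -scalemxAr -scalemxAl mxE. Qed.

Lemma bfDl M x y v : bf M (x + y) v = bf M x v + bf M y v.
Proof. by rewrite /bf !mulmxDl mxE. Qed.

Lemma bfZl M a x v : bf M (a *: x) v = a * bf M x v.
Proof. by rewrite /bf -!scalemxAl mxE. Qed.

Lemma bfDr M x v w : bf M x (v + w) = bf M x v + bf M x w.
Proof. by rewrite /bf linearD /= mulmxDr mxE. Qed.

Lemma bfZr M a x v : bf M x (a *: v) = a * bf M x v.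
Proof. by rewrite /bf linearZ /= -scalemxAr mxE. Qed.

Lemma bfC M x y : M^T = M -> bf M x y = bf M y x.
Proof.
move=> sM; have trE (A : 'M[R]_1) : A 0 0 = A^T 0 0 by rewrite mxE.
by rewrite /bf trE !trmx_mul trmxK sM mulmxA.
Qed.

Lemma qf_comb M s t x v : M^T = M ->
  qf M (s *: x + t *: v) = s ^+ 2 * qf M x + 2 * s * t * bf M x v + t ^+ 2 * qf M v.
Proof.
by move=> sM; rewrite !qfE !(bfDl, bfDr, bfZl, bfZr) (bfC _ v) //; ring.
Qed.

(* A quarter of the discriminant of the binary form (s, t) |-> qf M (s *: x + t *: v). *)
Definition disc M x v := bf M x v ^+ 2 - qf M x * qf M v.

Definition disc_polar M x v w := bf M x v * bf M x w - qf M x * bf M v w.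

Lemma disc_comb M x v w a b : M^T = M ->
  disc M x (a *: v + b *: w) =
  a ^+ 2 * disc M x v + 2 * a * b * disc_polar M x v w + b ^+ 2 * disc M x w.
Proof.
move=> sM; rewrite /disc /disc_polar qf_comb // bfDr !bfZr; ring.
Qed.

Lemma disc_scale M x c : disc M x (c *: x) = 0.
Proof. by rewrite /disc !qfE bfZl !bfZr; ring. Qed.

Lemma bfE M x v : bf M x v =
  (x 0 i0 * M i0 i0 + x 0 i1 * M i1 i0 + x 0 i2 * M i2 i0) * v 0 i0 +
  (x 0 i0 * M i0 i1 + x 0 i1 * M i1 i1 + x 0 i2 * M i2 i1) * v 0 i1 +
  (x 0 i0 * M i0 i2 + x 0 i1 * M i1 i2 + x 0 i2 * M i2 i2) * v 0 i2.
Proof. by rewrite /bf mxE sum_ord3 ![(_ *m _) _ _]mxE !sum_ord3 ![_^T _ _]mxE. Qed.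

Lemma sym_mx3 M : M^T = M -> [/\ M i1 i0 = M i0 i1, M i2 i0 = M i0 i2 & M i2 i1 = M i1 i2].
Proof. by move=> sM; split; rewrite -[in LHS]sM mxE. Qed.

Lemma disc_gram M x v w : M^T = M ->
  disc M x v * disc M x w - disc_polar M x v w ^+ 2 =
  qf M x * \det M * bracket x v w ^+ 2.
Proof.
move=> /sym_mx3[e1 e2 e3].
by rewrite /disc /disc_polar !qfE !bfE det_mx33 bracketE e1 e2 e3; ring.
Qed.

Lemma det_eq0_of_bf0 M z : z != 0 -> (forall y, bf M z y = 0) -> \det M = 0.
Proof.
move=> z_neq0 h; have zM : z *m M = 0.
  apply/rowP => k; have := h (delta_mx 0 k).
  by rewrite /bf trmx_delta -colE !mxE.
apply/eqP; apply: contraNT z_neq0 => detM.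
have uM : M \in unitmx by rewrite unitmxE unitfE.
by rewrite -(mulmxK uM z) zM mul0mx.
Qed.

Lemma exists_bracket_neq0 x : x != 0 -> exists v w, bracket x v w != 0.
Proof.
move=> x_neq0; pose e k : 'rV[R]_3 := delta_mx 0 k.
have [x0|] := eqVneq (x 0 i0) 0; last first.
  by exists (e i1), (e i2); rewrite (_ : bracket _ _ _ = x 0 i0) // bracketE !mxE /=; ring.
have [x1|] := eqVneq (x 0 i1) 0; last first.
  by exists (e i2), (e i0); rewrite (_ : bracket _ _ _ = x 0 i1) // bracketE !mxE /=; ring.
have [x2|] := eqVneq (x 0 i2) 0; last first.
  by exists (e i0), (e i1); rewrite (_ : bracket _ _ _ = x 0 i2) // bracketE !mxE /=; ring.
case/eqP: x_neq0; apply/rowP => -[[|[|[|//]]] k]; rewrite mxE;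
  [rewrite -x0 | rewrite -x1 | rewrite -x2]; by congr (x _ _); apply: val_inj.
Qed.

Lemma line_meets_of_disc_ge0 M x v : M^T = M -> qf M x != 0 -> 0 <= disc M x v ->
  line_meets M x v.
Proof.
move=> sM qx dv; exists ((Num.sqrt (disc M x v) - bf M x v) / qf M x), 1.
split; first by right; exact: oner_neq0.
rewrite qf_comb //; set r := Num.sqrt _; set b := bf M x v.
have r2 : r ^+ 2 = b ^+ 2 - qf M x * qf M v by rewrite sqr_sqrtr.
rewrite (_ : _ + _ = (r ^+ 2 - b ^+ 2 + qf M x * qf M v) / qf M x); last by field.
by rewrite r2 (_ : _ + _ = 0) ?mul0r //; ring.
Qed.

Lemma qf_line_eq0 M x v s t : M^T = M -> disc M x v < 0 ->
  qf M (s *: x + t *: v) = 0 -> s = 0 /\ t = 0.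
Proof.
move=> sM dv; rewrite qf_comb // => e.
have E : (s * qf M x + t * bf M x v) ^+ 2 - t ^+ 2 * disc M x v =
    qf M x * (s ^+ 2 * qf M x + 2 * s * t * bf M x v + t ^+ 2 * qf M v).
  by rewrite /disc; ring.
rewrite e mulr0 in E.
have qx : qf M x != 0.
  by apply: contraTneq dv => qx0; rewrite /disc qx0 mul0r subr0 -leNgt sqr_ge0.
have t0 : t = 0.
  apply/eqP; rewrite -sqrf_eq0 eq_le sqr_ge0 andbT.
  rewrite -(pmulr_lle0 _ (_ : 0 < - disc M x v)) ?oppr_gt0 //.
  by rewrite mulrN oppr_le0 (_ : _ * _ = (s * qf M x + t * bf M x v) ^+ 2) ?sqr_ge0 //; lra.
by move: E; rewrite t0 !mul0r addr0 expr0n /= mul0r subr0 => /eqP;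
  rewrite sqrf_eq0 mulf_eq0 (negbTE qx) orbF => /eqP.
Qed.

Lemma exists_disc_lt0 M x : M^T = M -> \det M * qf M x < 0 -> exists v, disc M x v < 0.
Proof.
move=> sM neg; have x_neq0 : x != 0.
  by apply: contraTneq neg => ->; rewrite qfE /bf !mul0mx mxE mulr0 ltxx.
have [v [w dvw]] := exists_bracket_neq0 x_neq0.
have : disc M x v * disc M x w - disc_polar M x v w ^+ 2 < 0.
  by rewrite disc_gram // [qf M x * _]mulrC pmulr_llt0 // exprn_even_gt0.
by case/indefinite_binary_form => a [b hab]; exists (a *: v + b *: w); rewrite disc_comb.
Qed.

Lemma disc_ge0 M x z v : M^T = M -> z != 0 -> qf M z = 0 -> 0 < \det M * qf M x ->
  0 <= disc M x v.
Proof.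
(* Otherwise Gram's identity makes disc M x nonpositive; its zero z is then in its kernel,
   which puts z in the kernel of M. *)
move=> sM z_neq0 qz pos; rewrite leNgt; apply/negP => dv.
have disc_le0 w : disc M x w <= 0.
  have := disc_gram x v w sM.
  have : 0 <= qf M x * \det M * bracket x v w ^+ 2.
    by rewrite mulrC [qf M x * _]mulrC mulr_ge0 ?sqr_ge0 // ltW.
  nra.
have bxz : bf M x z = 0.
  by have := disc_le0 z; rewrite /disc qz mulr0 subr0 => h; apply/eqP;
    rewrite -sqrf_eq0 eq_le h sqr_ge0.
have qx : qf M x != 0 by apply: contraTneq pos => ->; rewrite mulr0 ltxx.
have bz y : bf M z y = 0.
  have : disc_polar M x z y = 0.
    apply: (@quad_nonpos_lin_eq0 _ _ (disc M x y)) => t; have := disc_le0 (1 *: z + t *: y).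
    have dz : disc M x z = 0 by rewrite /disc bxz qz expr0n /= mulr0 subr0.
    by rewrite disc_comb // dz; lra.
  by rewrite /disc_polar bxz mul0r sub0r => /eqP; rewrite oppr_eq0 mulf_eq0 (negbTE qx) => /eqP.
by move: pos; rewrite (det_eq0_of_bf0 z_neq0 bz) mul0r ltxx.
Qed.

Lemma inside_iff M x z : M^T = M -> z != 0 -> qf M z = 0 -> \det M != 0 ->
  qf M x != 0 -> inside M x <-> 0 < \det M * qf M x.
Proof.
move=> sM z_neq0 qz detM qx; split=> [[_ meets]|pos]; last first.
  split=> [|v _ _]; first exact/eqP.
  by apply: line_meets_of_disc_ge0 => //; apply: disc_ge0 z_neq0 qz pos.
rewrite lt_def mulf_neq0 //= leNgt; apply/negP => neg.
have [v dv] := exists_disc_lt0 sM neg.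
have v_neq0 : hpoint v.
  by apply/eqP => v0; move: dv; rewrite v0 -(scale0r x) disc_scale ltxx.
have v_nprop : ~ proj_eq v x by case=> c [_ vx]; move: dv; rewrite vx disc_scale ltxx.
have [s [t [st e]]] := meets v v_neq0 v_nprop.
by have [s0 t0] := qf_line_eq0 sM dv e; case: st => /eqP.
Qed.

End QuadraticForms.

Section Pencil.
Variable R : realType.
Implicit Types (x y a b c u v w z : 'rV[R]_3).

Lemma lformE l x : lform l x = l 0 i0 * x 0 i0 + l 0 i1 * x 0 i1 + l 0 i2 * x 0 i2.
Proof. exact: sum_ord3. Qed.

Definition cross3 a b : 'rV[R]_3 :=
  \row_k (if k == i0 then a 0 i1 * b 0 i2 - a 0 i2 * b 0 i1
          else if k == i1 then a 0 i2 * b 0 i0 - a 0 i0 * b 0 i2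
          else a 0 i0 * b 0 i1 - a 0 i1 * b 0 i0).

Lemma cross3E a b : [/\ cross3 a b 0 i0 = a 0 i1 * b 0 i2 - a 0 i2 * b 0 i1,
  cross3 a b 0 i1 = a 0 i2 * b 0 i0 - a 0 i0 * b 0 i2 &
  cross3 a b 0 i2 = a 0 i0 * b 0 i1 - a 0 i1 * b 0 i0].
Proof. by rewrite !mxE. Qed.

Lemma lform_cross3 a b y : lform (cross3 a b) y = bracket a b y.
Proof. by have [e0 e1 e2] := cross3E a b; rewrite lformE e0 e1 e2 bracketE; ring. Qed.

Definition line_pair u v : 'M[R]_3 := \matrix_(k, l) (u 0 k * v 0 l + v 0 k * u 0 l).

Lemma line_pair_sym u v : (line_pair u v)^T = line_pair u v.
Proof. by apply/matrixP => k l; rewrite !mxE addrC [u 0 l * _]mulrC [v 0 l * _]mulrC. Qed.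

Lemma qf_line_pair u v y : qf (line_pair u v) y = 2 * lform u y * lform v y.
Proof. by rewrite qfE bfE !lformE !mxE; ring. Qed.

Lemma det_line_pair_pencil u v w z (s t : R) :
  \det (s *: line_pair u v + t *: line_pair w z) =
  - 2 * s * t * (s * (bracket u v w * bracket u v z) + t * (bracket w z u * bracket w z v)).
Proof. by rewrite det_mx33 !bracketE !mxE; ring. Qed.

Lemma bracket_cycle a b c : bracket a b c = bracket b c a.
Proof. by rewrite !bracketE; ring. Qed.

Lemma bracket_swap a b c : bracket a b c = - bracket b a c.
Proof. by rewrite !bracketE; ring. Qed.

Lemma bracket_repeat a b : bracket a b a = 0 /\ bracket a b b = 0.
Proof. by rewrite !bracketE; split; ring. Qed.

Lemma bracket_pluecker x a b c d : bracket x a b * bracket x c d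
  - bracket x a c * bracket x b d + bracket x a d * bracket x b c = 0.
Proof. by rewrite !bracketE; ring. Qed.

Section FourPoints.
Variables q0 q1 q2 q3 : 'rV[R]_3.

Definition pencil_g y := bracket q0 q1 y * bracket q2 q3 y.
Definition pencil_h y := bracket q0 q2 y * bracket q1 q3 y.

(* The member through y of the pencil of conics through q0, q1, q2, q3, spanned by the line
   pairs q0q1.q2q3 and q0q2.q1q3. *)
Definition pencil_conic y : 'M[R]_3 :=
  pencil_h y *: line_pair (cross3 q0 q1) (cross3 q2 q3)
  + (- pencil_g y) *: line_pair (cross3 q0 q2) (cross3 q1 q3).

Definition pencil_sign y := pencil_g y * pencil_h y * (bracket q0 q3 y * bracket q1 q2 y).

Definition base_brackets :=
  bracket q0 q1 q2 * bracket q0 q1 q3 * bracket q0 q2 q3 * bracket q1 q2 q3.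

Lemma pencil_conic_sym y : (pencil_conic y)^T = pencil_conic y.
Proof. by rewrite linearD !linearZ /= !line_pair_sym. Qed.

Lemma qf_pencil_conic y x :
  qf (pencil_conic y) x = 2 * (pencil_h y * pencil_g x - pencil_g y * pencil_h x).
Proof. by rewrite qfD !qfZ !qf_line_pair !lform_cross3 /pencil_g /pencil_h; ring. Qed.

Lemma qf_pencil_conicC y x : qf (pencil_conic y) x = - qf (pencil_conic x) y.
Proof. by rewrite !qf_pencil_conic; ring. Qed.

Lemma qf_pencil_conic_self y : qf (pencil_conic y) y = 0.
Proof. by rewrite qf_pencil_conic; ring. Qed.

Lemma qf_pencil_conic_base y : [/\ qf (pencil_conic y) q0 = 0, qf (pencil_conic y) q1 = 0,
  qf (pencil_conic y) q2 = 0 & qf (pencil_conic y) q3 = 0].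
Proof.
rewrite !qf_pencil_conic /pencil_g /pencil_h.
have [-> ->] := bracket_repeat q0 q1; have [-> ->] := bracket_repeat q2 q3.
have [-> ->] := bracket_repeat q0 q2; have [-> ->] := bracket_repeat q1 q3.
by split; ring.
Qed.

Lemma det_pencil_conic y : \det (pencil_conic y) = 2 * base_brackets * pencil_sign y.
Proof.
have e1 : bracket (cross3 q0 q1) (cross3 q2 q3) (cross3 q0 q2) =
  - (bracket q0 q1 q2 * bracket q0 q2 q3) by rewrite !bracketE !mxE /=; ring.
have e2 : bracket (cross3 q0 q1) (cross3 q2 q3) (cross3 q1 q3) =
  - (bracket q0 q1 q3 * bracket q1 q2 q3) by rewrite !bracketE !mxE /=; ring.
have e3 : bracket (cross3 q0 q2) (cross3 q1 q3) (cross3 q0 q1) =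
  bracket q0 q1 q2 * bracket q0 q1 q3 by rewrite !bracketE !mxE /=; ring.
have e4 : bracket (cross3 q0 q2) (cross3 q1 q3) (cross3 q2 q3) =
  bracket q0 q2 q3 * bracket q1 q2 q3 by rewrite !bracketE !mxE /=; ring.
have e5 : pencil_h y - pencil_g y = bracket q0 q3 y * bracket q1 q2 y.
  by rewrite /pencil_h /pencil_g !bracketE; ring.
rewrite det_line_pair_pencil e1 e2 e3 e4 /pencil_sign -e5 /base_brackets; ring.
Qed.

Lemma pencil_inside_xor A B : base_brackets != 0 ->
  0 < pencil_sign A * pencil_sign B -> qf (pencil_conic B) A != 0 ->
  (0 < \det (pencil_conic B) * qf (pencil_conic B) A) =
  ~~ (0 < \det (pencil_conic A) * qf (pencil_conic A) B).
Proof.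
move=> base_neq0 sAB qBA; rewrite [qf _ B]qf_pencil_conicC; apply: sign_xor => //.
have base2 : 0 < base_brackets ^+ 2 by rewrite exprn_even_gt0 //= base_neq0.
rewrite !det_pencil_conic
  [X in 0 < X](_ : _ = 4 * base_brackets ^+ 2 * (pencil_sign A * pencil_sign B)).
  by apply: mulr_gt0 sAB; apply: mulr_gt0 base2; rewrite ltr0n.
by ring.
Qed.

Lemma pencil_sign_mul_gt0 A B (lam : R) :
  let same_side a b := 0 < lam * (bracket a b A * bracket a b B) in
  same_side q0 q1 -> same_side q2 q3 -> same_side q0 q2 ->
  same_side q1 q3 -> same_side q0 q3 -> same_side q1 q2 ->
  0 < pencil_sign A * pencil_sign B.
Proof.
move=> /= h01 h23 h02 h13 h03 h12; have lam_neq0 : lam != 0.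
  by apply: contraTneq h01 => ->; rewrite mul0r ltxx.
have lam6 : 0 < lam ^+ 6 by rewrite exprn_even_gt0 //= lam_neq0.
rewrite -(pmulr_rgt0 _ lam6).
rewrite (_ : _ * _ = lam * (bracket q0 q1 A * bracket q0 q1 B) *
  (lam * (bracket q2 q3 A * bracket q2 q3 B)) * (lam * (bracket q0 q2 A * bracket q0 q2 B)) *
  (lam * (bracket q1 q3 A * bracket q1 q3 B)) * (lam * (bracket q0 q3 A * bracket q0 q3 B)) *
  (lam * (bracket q1 q2 A * bracket q1 q2 B))).
  by do 5! apply: mulr_gt0 => //.
by rewrite /pencil_sign /pencil_g /pencil_h; ring.
Qed.

End FourPoints.
End Pencil.

Section ConvexHeptagon.
Variable R : realType.
Variables (p : 'I_7 -> 'rV[R]_3) (l : 'rV[R]_3).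
Hypothesis l_neq0 : forall i, lform l (p i) != 0.
Hypothesis edge_side : forall i j k : 'I_7, j != i -> j != ordS i -> k != i -> k != ordS i ->
  0 < (bracket (p i) (p (ordS i)) (p j) / lform l (p j)) *
      (bracket (p i) (p (ordS i)) (p k) / lform l (p k)).

(* The orientation of the triangle p_a p_b p_c in the affine chart complementary to l. *)
Definition orient a b c :=
  bracket (p a) (p b) (p c) / (lform l (p a) * lform l (p b) * lform l (p c)).

Lemma orient_cycle a b c : orient a b c = orient b c a.
Proof. by rewrite /orient bracket_cycle; congr (_ / _); ring. Qed.

Lemma orient_swap a b c : orient a b c = - orient b a c.
Proof. by rewrite /orient bracket_swap mulNr; congr (- (_ / _)); ring. Qed.

Lemma orient_swapr a b c : orient a b c = - orient a c b.
Proof. by rewrite orient_swap orient_cycle. Qed.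

Lemma orient_edge i j k : j != i -> j != ordS i -> k != i -> k != ordS i ->
  0 < orient i (ordS i) j * orient i (ordS i) k.
Proof.
move=> ji jS ki kS; have := edge_side ji jS ki kS.
rewrite [X in 0 < X -> _](_ : _ = orient i (ordS i) j * orient i (ordS i) k *
  (lform l (p i) * lform l (p (ordS i))) ^+ 2); last by rewrite /orient; field; rewrite !l_neq0.
by rewrite pmulr_lgt0 // exprn_even_gt0 //= mulf_neq0 ?l_neq0.
Qed.

Lemma orient_pluecker o a b c d :
  orient o a b * orient o c d - orient o a c * orient o b d + orient o a d * orient o b c = 0.
Proof.
rewrite (_ : _ + _ = (bracket (p o) (p a) (p b) * bracket (p o) (p c) (p d)
  - bracket (p o) (p a) (p c) * bracket (p o) (p b) (p d)
  + bracket (p o) (p a) (p d) * bracket (p o) (p b) (p c)) /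
  (lform l (p o) ^+ 2 * lform l (p a) * lform l (p b) * lform l (p c) * lform l (p d))).
  by rewrite bracket_pluecker mul0r.
by rewrite /orient; field; rewrite !l_neq0.
Qed.

Local Notation cyc t := (inZp t : 'I_7).

Lemma cyc_mod m n : (m %% 7 = n %% 7)%N -> cyc m = cyc n.
Proof. by move=> mn; apply: val_inj. Qed.

Lemma cyc_eq m n : (cyc m == cyc n) = (m %% 7 == n %% 7)%N.
Proof. by []. Qed.

Lemma ordS_cyc t : ordS (cyc t) = cyc (t + 1).
Proof. by apply: val_inj => /=; lia. Qed.

(* Convexity means that every triangle with cyclically ordered vertices has the sign of sigma. *)
Definition sigma := orient (cyc 0) (cyc 1) (cyc 2).

Lemma orient_next_gt0 t k : (2 <= k <= 6)%N ->
  0 < sigma * orient (cyc t) (cyc (t + 1)) (cyc (t + k)).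
Proof.
elim: t k => [|t IH] k k_range.
  rewrite /sigma -[cyc (0 + 1)]ordS_cyc.
  by apply: orient_edge; rewrite ?ordS_cyc cyc_eq; lia.
have e : orient (cyc t) (cyc (t + 1)) (cyc (t + 2)) =
    orient (cyc t.+1) (ordS (cyc t.+1)) (cyc t).
  by rewrite orient_cycle ordS_cyc; congr orient; apply: cyc_mod; lia.
apply: (sign_trans (IH 2%N isT)); rewrite e -[cyc (t.+1 + 1)]ordS_cyc.
by apply: orient_edge; rewrite ?ordS_cyc cyc_eq; lia.
Qed.

Lemma orient_last_gt0 t k : (1 <= k <= 5)%N ->
  0 < sigma * orient (cyc t) (cyc (t + k)) (cyc (t + 6)).
Proof.
move=> k_range; rewrite -orient_cycle (@cyc_mod t (t + 6 + 1)) ?(@cyc_mod (t + k) (t + 6 + k.+1));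
  try lia.
by apply: orient_next_gt0; lia.
Qed.

Lemma orient_adjacent_gt0 t k : (1 <= k <= 5)%N ->
  0 < sigma * orient (cyc t) (cyc (t + k)) (cyc (t + k.+1)).
Proof.
move=> k_range; rewrite orient_cycle (@cyc_mod (t + k.+1) (t + k + 1))
  ?(@cyc_mod t (t + k + (7 - k))); try lia.
by apply: orient_next_gt0; lia.
Qed.

Lemma orient_skip_gt0 t : 0 < sigma * orient (cyc t) (cyc (t + 2)) (cyc (t + 4)).
Proof.
have := orient_pluecker (cyc t) (cyc (t + 2)) (cyc (t + 4)) (cyc (t + 3)) (cyc (t + 6)).
rewrite [orient _ (cyc (t + 4)) (cyc (t + 3))]orient_swapr mulrN.
have h36 := @orient_last_gt0 t 3 isT; have h46 := @orient_last_gt0 t 4 isT.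
have h26 := @orient_last_gt0 t 2 isT; have h23 := @orient_adjacent_gt0 t 2 isT.
have h34 := @orient_adjacent_gt0 t 3 isT.
move: h36 h46 h26 h23 h34; set o := orient (cyc t); set c := fun k => cyc (t + k).
move=> h36 h46 h26 h23 h34 pl.
have e : o (c 2) (c 4) * o (c 3) (c 6) =
    o (c 2) (c 3) * o (c 4) (c 6) + o (c 2) (c 6) * o (c 3) (c 4).
  by lra.
have : 0 < (sigma * o (c 2) (c 4)) * (sigma * o (c 3) (c 6)).
  rewrite [X in 0 < X](_ : _ = (sigma * o (c 2) (c 3)) * (sigma * o (c 4) (c 6)) +
    (sigma * o (c 2) (c 6)) * (sigma * o (c 3) (c 4))).
    by apply: addr_gt0; apply: mulr_gt0.
  transitivity (sigma ^+ 2 * (o (c 2) (c 4) * o (c 3) (c 6))); first by ring.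
  by rewrite e; ring.
by rewrite pmulr_lgt0.
Qed.

Lemma orient_ordered_gt0 t k m : (1 <= k)%N -> (k < m <= 6)%N ->
  0 < sigma * orient (cyc t) (cyc (t + k)) (cyc (t + m)).
Proof.
move=> k_ge1 km.
have [->|k_neq1] := eqVneq k 1%N; first by apply: orient_next_gt0; lia.
have [->|m_neq6] := eqVneq m 6%N; first by apply: orient_last_gt0; lia.
have [->|m_neqSk] := eqVneq m k.+1; first by apply: orient_adjacent_gt0; lia.
have [[-> ->]|[[-> ->]|[-> ->]]] : (k = 2 /\ m = 4 \/ k = 2 /\ m = 5 \/ k = 3 /\ m = 5)%N by lia.
- exact: orient_skip_gt0.
- rewrite -orient_cycle (@cyc_mod t (t + 5 + 2)) ?(@cyc_mod (t + 2) (t + 5 + 4)); try lia.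
  exact: orient_skip_gt0.
- rewrite orient_cycle (@cyc_mod t (t + 3 + 4)) ?(@cyc_mod (t + 5) (t + 3 + 2)); try lia.
  exact: orient_skip_gt0.
Qed.

Lemma cyc_offset (i a : 'I_7) : a != i -> a != ordS i ->
  exists2 k, (2 <= k <= 6)%N & a = cyc (i + k).
Proof.
move=> ai aS; exists ((a + 7 - i) %% 7)%N; have := ltn_ord i; have := ltn_ord a;
  move: ai aS; rewrite -!(inj_eq val_inj) /= => ai aS ? ?; first lia.
by apply: val_inj => /=; lia.
Qed.

Lemma orient_same_side (i a b : 'I_7) : a != i -> a != ordS i -> b != i -> b != ordS i ->
  a != b -> 0 < orient a b i * orient a b (ordS i).
Proof.
move=> ai aS bi bS ab.
have [ka ka_range ea] := cyc_offset ai aS; have [kb kb_range eb] := cyc_offset bi bS.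
have ka_neq_kb : ka != kb by apply: contraNneq ab => e; rewrite ea eb e.
have ei : i = cyc i by apply: val_inj => /=; rewrite modn_small.
have eS : ordS i = cyc (i + 1) by rewrite {1}ei ordS_cyc.
rewrite -(orient_cycle i) -(orient_cycle (ordS i)) eS ea eb {1}ei.
rewrite {2}(@cyc_mod (i + ka) (i + 1 + (ka - 1))); last lia.
rewrite {2}(@cyc_mod (i + kb) (i + 1 + (kb - 1))); last lia.
move: ka_neq_kb; rewrite neq_ltn => /orP[lt|gt].
  by apply: (@sign_common _ sigma); apply: orient_ordered_gt0; lia.
rewrite orient_swapr [orient (cyc (i + 1)) _ _]orient_swapr mulrNN.
by apply: (@sign_common _ sigma); apply: orient_ordered_gt0; lia.
Qed.

Lemma bracket_same_side (i a b : 'I_7) : a != i -> a != ordS i -> b != i -> b != ordS i ->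
  a != b -> 0 < (lform l (p i) * lform l (p (ordS i))) *
    (bracket (p a) (p b) (p i) * bracket (p a) (p b) (p (ordS i))).
Proof.
move=> ai aS bi bS ab; have := orient_same_side ai aS bi bS ab.
rewrite [X in 0 < X -> _](_ : _ = (lform l (p i) * lform l (p (ordS i))) *
  (bracket (p a) (p b) (p i) * bracket (p a) (p b) (p (ordS i))) /
  ((lform l (p a) * lform l (p b)) ^+ 2 * (lform l (p i) * lform l (p (ordS i))) ^+ 2)).
  by rewrite pmulr_lgt0 // invr_gt0 mulr_gt0 // exprn_even_gt0 //= mulf_neq0.
by rewrite /orient; field; rewrite !l_neq0.
Qed.

End ConvexHeptagon.

Section ConicsThroughFive.
Variable R : realType.
Variable p : 'I_7 -> 'rV[R]_3.
Hypothesis typ : typical p.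

Lemma inside_scale (c : R) M y : c != 0 -> inside M y -> inside (c *: M) y.
Proof.
move=> c_neq0 [y_off meets]; split=> [|v v_neq0 v_nprop].
  by rewrite /on_conic qfZ => /eqP; rewrite mulf_eq0 (negbTE c_neq0) => /eqP.
have [s [t [st e]]] := meets v v_neq0 v_nprop.
by exists s, t; split=> //; rewrite qfZ e mulr0.
Qed.

Lemma typical_conic_eq0 M j : M^T = M -> (forall k, k != j -> qf M (p k) = 0) -> M = 0.
Proof.
move=> sM vanish; apply/eqP; apply: contraT => M_neq0; case: typ => _ /(_ [set~ j]).
rewrite cardsC1 card_ord => /(_ erefl); case; exists M; split=> // k.
by rewrite in_setC1; apply: vanish.
Qed.

Lemma conicQ_proportional x j M M' : x != j -> conicQ p x j M -> conicQ p x j M' ->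
  qf M (p x) *: M' = qf M' (p x) *: M.
Proof.
move=> xj [[_ sM] onM] [[_ sM'] onM']; apply/eqP; rewrite -subr_eq0; apply/eqP.
apply: (@typical_conic_eq0 _ j) => [|k kj].
  by rewrite linearB !linearZ /= sM sM'.
rewrite qfD qfZ -scaleNr qfZ; have [->|kx] := eqVneq k x; first ring.
by rewrite (onM k) // (onM' k) // !mulr0 addr0.
Qed.

Lemma inside_QE x j M : x != j -> conicQ p x j M -> qf M (p x) != 0 ->
  inside_Q p x j <-> inside M (p x).
Proof.
move=> xj cM qx; split=> [[M' [cM' inM']]|inM]; last by exists M.
have qx' : qf M' (p x) != 0 by case: inM' => /eqP.
have := inside_scale qx inM'; rewrite (conicQ_proportional xj cM cM') => inM''.
by rewrite -[M](scale1r M) -(mulVf qx') -scalerA; apply: inside_scale; rewrite ?invr_eq0.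
Qed.

End ConicsThroughFive.

Section PencilThroughFour.
Variable R : realType.
Variables (p : 'I_7 -> 'rV[R]_3) (a0 a1 a2 a3 x y j : 'I_7).
Hypothesis typ : typical p.
Hypothesis a0_neq0 : p a0 != 0.
Hypothesis uniq_a : uniq [:: a0; a1; a2; a3].
Hypothesis uniq_xyj : uniq [:: x; y; j].
Hypothesis cover : forall k, (k \in [:: a0; a1; a2; a3]) = [&& k != x, k != y & k != j].
Hypothesis sign_neq0 : pencil_sign (p a0) (p a1) (p a2) (p a3) (p y) != 0.

Local Notation Cy := (pencil_conic (p a0) (p a1) (p a2) (p a3) (p y)).

Lemma base_brackets_neq0 : base_brackets (p a0) (p a1) (p a2) (p a3) != 0.
Proof.
case: typ => noncol _; move: uniq_a; rewrite /= !inE !negb_or.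
move=> /and4P[/and3P[d01 d02 d03] /andP[d12 d13] d23 _].
by rewrite !mulf_neq0 //; apply/eqP; apply: noncol.
Qed.

Lemma det_pencil_conic_neq0 : \det Cy != 0.
Proof.
rewrite det_pencil_conic; apply: mulf_neq0 => //.
by apply: mulf_neq0; rewrite ?pnatr_eq0 ?base_brackets_neq0.
Qed.

Lemma pencil_conicQ : conicQ p x j Cy.
Proof.
split=> [|k kx kj].
  split; last exact: pencil_conic_sym.
  by apply: contraNneq det_pencil_conic_neq0 => ->; rewrite det0.
have [->|ky] := eqVneq k y; first exact: qf_pencil_conic_self.
have [? ? ? ?] := qf_pencil_conic_base (p a0) (p a1) (p a2) (p a3) (p y).
by have := cover k; rewrite kx ky kj !inE => /or4P[] /eqP->.
Qed.

Lemma qf_pencil_conic_neq0 : qf Cy (p x) != 0.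
Proof.
have [[Cy_neq0 sCy] onCy] := pencil_conicQ; apply: contra_neq Cy_neq0 => qx0.
apply: (typical_conic_eq0 typ (j := j)) => // k kj.
by have [->|kx] := eqVneq k x; [exact: qx0 | exact: onCy].
Qed.

Lemma inside_Q_pencil : inside_Q p x j <-> 0 < \det Cy * qf Cy (p x).
Proof.
have xj : x != j by move: uniq_xyj; rewrite /= !inE negb_or => /andP[/andP[]].
rewrite (inside_QE typ xj pencil_conicQ qf_pencil_conic_neq0).
have [z0 _ _ _] := qf_pencil_conic_base (p a0) (p a1) (p a2) (p a3) (p y).
exact: inside_iff (pencil_conic_sym _ _ _ _ _) a0_neq0 z0 det_pencil_conic_neq0
  qf_pencil_conic_neq0.
Qed.

End PencilThroughFour.

Lemma dcoef_add_ordS (R : realType) (p : 'I_7 -> 'rV[R]_3) (i j : 'I_7) :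
  config7 p -> typical p -> heptagonal_cyclic p -> j != i -> j != ordS i ->
  (dcoef p i j + dcoef p (ordS i) j = 1)%N.
Proof.
move=> [p_neq0 _] typ [l [l_neq0 edge]] ji jS.
have iS : i != ordS i by rewrite eq_sym ordS_neq.
have uniq_iSj : uniq [:: i; ordS i; j] by rewrite /= !inE !negb_or iS !(eq_sym _ j) ji jS.
have uniq_Sij : uniq [:: ordS i; i; j] by rewrite /= !inE !negb_or ordS_neq !(eq_sym _ j) ji jS.
have [a0 [a1 [a2 [a3 [uniq_a cover]]]]] := enum_neq3 uniq_iSj (card_ord 7).
have cover' k : (k \in [:: a0; a1; a2; a3]) = [&& k != ordS i, k != i & k != j].
  by rewrite cover andbCA.
have side m n : m \in [:: a0; a1; a2; a3] -> n \in [:: a0; a1; a2; a3] -> m != n ->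
    0 < (lform l (p i) * lform l (p (ordS i))) *
      (bracket (p m) (p n) (p i) * bracket (p m) (p n) (p (ordS i))).
  by rewrite !cover => /and3P[mi mS _] /and3P[ni nS _]; exact: bracket_same_side.
have sign_gt0 : 0 < pencil_sign (p a0) (p a1) (p a2) (p a3) (p i) *
                    pencil_sign (p a0) (p a1) (p a2) (p a3) (p (ordS i)).
  move: (uniq_a); rewrite /= !inE !negb_or => /and4P[/and3P[d01 d02 d03] /andP[d12 d13] d23 _].
  by apply: pencil_sign_mul_gt0; apply: side; rewrite ?inE ?eqxx ?orbT.
move: (lt0r_neq0 sign_gt0); rewrite mulf_eq0 negb_or => /andP[si_neq0 sS_neq0].
have inQi := inside_Q_pencil typ (p_neq0 a0) uniq_a uniq_iSj cover sS_neq0.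
have inQS := inside_Q_pencil typ (p_neq0 a0) uniq_a uniq_Sij cover' si_neq0.
rewrite /dcoef (asbool_equiv_eqP idP inQi) (asbool_equiv_eqP idP inQS).
rewrite pencil_inside_xor ?(base_brackets_neq0 typ uniq_a) //.
  by case: (0 < _).
exact: qf_pencil_conic_neq0 typ uniq_a cover sS_neq0.
Qed.

Lemma dom_index_split (R : realType) (p : 'I_7 -> 'rV[R]_3) (i k : 'I_7) : k != i ->
  dom_index p i = (dcoef p i k + \sum_(j < 7 | (j != i) && (j != k)) dcoef p i j)%N.
Proof. by move=> ki; rewrite /dom_index (bigD1 k). Qed.

Theorem lemma3p5 (R : realType) (p : 'I_7 -> 'rV[R]_3) :
  config7 p -> typical p -> heptagonal_cyclic p ->
  forall i : 'I_7,
    (internal_edge p i -> (dom_index p i + dom_index p (ordS i) = 5)%N) /\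
    (external_edge p i -> (dom_index p i + dom_index p (ordS i) = 7)%N).
Proof.
move=> cfg typ hept i.
have dom_sum : (dom_index p i + dom_index p (ordS i) =
    dcoef p i (ordS i) + dcoef p (ordS i) i + 5)%N.
  rewrite (dom_index_split p (ordS_neq i)) (dom_index_split p (k := i)) 1?eq_sym ?ordS_neq //.
  rewrite (eq_bigl _ _ (fun j => andbC (j != ordS i) (j != i))) addnACA -big_split /=.
  rewrite (eq_bigr (fun=> 1%N)) => [|j /andP[ji jS]]; last exact: dcoef_add_ordS.
  by rewrite sum1_card card_neq2 ?card_ord // eq_sym ordS_neq.
by split=> -[e1 e2]; rewrite dom_sum e1 e2.
Qed.
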